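(* Let $b, r \in \mathbb{N}$ with $4 \leq b < r < b + 2\left\lfloor\frac{b+2}{6}\right\rfloor^2$. Then $$h(b,r) \leq 8\lambda_{b,r}\left(2 + \left\lfloor\frac{r}{2}\right\rfloor + \left\lfloor\frac{b+2}{2}\right\rfloor - 2\left\lfloor\frac{b+2}{6}\right\rfloor\right),$$ where $\lambda_{b,r} = \max\{1, (b \bmod 2) + (r \bmod 2)\}$.
   Context: For a graph $G$ with an edge-colouring $f\colon E(G)\to\{1,\dots,k\}$ and $1\le j\le k$: for $S\subseteq V(G)$, $e_j(S)$ is the number of edges coloured $j$ in the subgraph of $G$ induced by $S$; for a vertex $v$, $e_j[v]=e_j(N[v])$ where $N[v]$ is the closed neighbourhood of $v$; $\deg_j(v)$ is the number of edges coloured $j$ incident to $v$. Given $k\ge 2$ and a strictly increasing sequence of positive integers $(a_1,\dots,a_k)$, a $d$-regular graph $G$ with $d=\sum_j a_j$ is an $(a_1,\dots,a_k)$-flip graph if there is an edge-colouring with colours $\{1,\dots,k\}$ such that $\deg_j(v)=a_j$ for every vertex $v$ and every $j$, and $e_k[v]<e_{k-1}[v]<\dots<e_1[v]$ for every vertex $v$. Such a sequence is then called a $k$-flip sequence. For a $2$-flip sequence $(b,r)$ (so $b<r$), $h(b,r)$ denotes the smallest number of vertices of a $(b,r)$-flip graph. *)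

From mathcomp Require Import all_boot.
Set Implicit Arguments. Unset Strict Implicit. Unset Printing Implicit Defensive.

Section FlipGraphs.
Variable n : nat.
Implicit Types (e : rel 'I_n) (c : 'I_n -> 'I_n -> nat).

Definition simple_graph e : Prop :=
  (forall u v, e u v = e v u) /\ (forall v, ~~ e v v).

Definition nbhd e (v : 'I_n) : {set 'I_n} := [set u | e v u].

Definition cnbhd e (v : 'I_n) : {set 'I_n} := [set u | (u == v) || e v u].

Definition deg_col e c (j : nat) (v : 'I_n) : nat :=
  #|[set u | e v u && (c v u == j)]|.

(* e_j(S): number of edges coloured j in the subgraph induced by S
   (each unordered edge {u,w} counted once, via u < w) *)
Definition ecol e c (j : nat) (S : {set 'I_n}) : nat :=
  #|[set p : 'I_n * 'I_n |
      [&& p.1 < p.2, p.1 \in S, p.2 \in S, e p.1 p.2 & c p.1 p.2 == j]]|.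

Definition ecol_v e c (j : nat) (v : 'I_n) : nat := ecol e c j (cnbhd e v).

Definition flip_colouring e (k : nat) (a : nat -> nat) c : Prop :=
  [/\ forall u v, e u v -> c u v = c v u,
      forall u v, e u v -> 1 <= c u v <= k,
      forall v j, 1 <= j <= k -> deg_col e c j v = a j
    & forall v j, 1 <= j < k -> ecol_v e c j.+1 v < ecol_v e c j v].

Definition flip_graph e (k : nat) (a : nat -> nat) : Prop :=
  [/\ simple_graph e,
      forall v : 'I_n, #|nbhd e v| = \sum_(1 <= j < k.+1) a j
    & exists c, flip_colouring e k a c].

End FlipGraphs.

Definition flip_seq_ok (k : nat) (a : nat -> nat) : Prop :=
  2 <= k /\ 0 < a 1 /\ forall j, 1 <= j < k -> a j < a j.+1.

Definition seq2 (b r : nat) : nat -> nat := fun j => if j == 1 then b else r.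

(* h(b,r) <= N : some (b,r)-flip graph (with at least one vertex) has at most
   N vertices; equivalent to "the minimum order h(b,r) exists and is <= N". *)
Definition h_le (b r N : nat) : Prop :=
  exists (n : nat) (e : rel 'I_n), 0 < n /\ n <= N /\ flip_graph e 2 (seq2 b r).

Definition lambda_br (b r : nat) : nat := maxn 1 (b %% 2 + r %% 2).

From mathcomp Require Import all_boot zify.
Set Implicit Arguments. Unset Strict Implicit. Unset Printing Implicit Defensive.

(* Take a = b/2 and the 4r vertices (i, j, z) with bits i, j and z in Z_r.
   Colour 2 (red, degree r) joins (i, j, z) to every (1 - i, j, z'); colour 1
   (blue, degree b) joins vertices with different j, and z to z' exactly when
   (z + z') mod r lies in [0, a) for equal i and in [a, b) otherwise.  Flipping
   the bits i, j is an automorphism, so it suffices to look at one closed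
   neighbourhood: it spans r + a(b - a) red and b + 2a(b - a) blue edges, and
   the flip condition becomes r < b + a(b - a).  This follows from
   r < b + 2 floor((b+2)/6)^2 because 2 floor((b+2)/6) <= a <= b - a, and 4r is
   below the claimed bound. *)

Lemma card_set_sum (T : finType) (P : pred T) :
  #|[set x | P x]| = \sum_(x : T) (P x : nat).
Proof. by rewrite -sum1_card big_mkcond; apply: eq_bigr => x _; rewrite inE; case: (P x). Qed.

Lemma sum_enum_val (T : finType) (F : T -> nat) :
  \sum_(u < #|T|) F (enum_val u) = \sum_(x : T) F x.
Proof. by rewrite -big_enum_val. Qed.

Lemma card_set_enum_val (T : finType) (P : pred T) :
  #|[set u : 'I_#|T| | P (enum_val u)]| = #|[set x | P x]|.
Proof. by rewrite !card_set_sum; apply: (sum_enum_val (fun x => (P x : nat))). Qed.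

Lemma card_set_mono (T : finType) (phi : T -> T) (R : rel T) x :
  injective phi -> {mono phi : y z / R y z} -> #|[set y | R (phi x) y]| = #|[set y | R x y]|.
Proof.
move=> phi_inj phi_R; rewrite !card_set_sum (reindex_inj phi_inj).
by apply: eq_bigr => y _; rewrite phi_R.
Qed.

Lemma sum_pairs_bipartite (T : finType) (S s : pred T) (R : rel T) :
  symmetric R -> (forall x y, R x y -> s y = ~~ s x) ->
  \sum_(x | S x) \sum_(y | S y) (R x y : nat) =
    (\sum_(x | S x && s x) \sum_(y | S y) (R x y : nat)).*2.
Proof.
move=> R_sym R_s; rewrite (bigID s) /= -addnn; congr (_ + _).
have across x : \sum_(y | S y) (R x y : nat) = \sum_(y | S y && (s y != s x)) (R x y : nat).
  rewrite [LHS](bigID (fun y => s y != s x)) /= [X in _ + X]big1 ?addn0 // => y /andP[_].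
  rewrite negbK => /eqP s_xy; case R_xy: (R x y) => //.
  by move: (R_s _ _ R_xy); rewrite s_xy; case: (s x).
rewrite (eq_bigr (fun x => \sum_(y | S y && s y) (R x y : nat))) => [|x /andP[_ /negbTE s_x]].
  rewrite exchange_big /=; apply: eq_bigr => y /andP[_ s_y].
  by rewrite across s_y; apply: eq_big => [x | x _]; [case: (s x) | rewrite R_sym].
by rewrite across s_x; apply: eq_bigl => y; case: (s y).
Qed.

Lemma card_lt_pairs_double n (R : rel 'I_n) : symmetric R -> irreflexive R ->
  #|[set p : 'I_n * 'I_n | (p.1 < p.2) && R p.1 p.2]|.*2 =
    \sum_(u < n) \sum_(w < n) (R u w : nat).
Proof.
move=> R_sym R_irr.
have -> : #|[set p : 'I_n * 'I_n | (p.1 < p.2) && R p.1 p.2]| =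
          \sum_(w < n) \sum_(u < n) ((w < u) && R u w : nat).
  rewrite card_set_sum -(pair_big xpredT xpredT (fun u w : 'I_n => ((u < w) && R u w : nat))).
  by apply: eq_bigr => w _; apply: eq_bigr => u _; rewrite R_sym.
rewrite -addnn {1}exchange_big -big_split; apply: eq_bigr => u _; rewrite -big_split.
apply: eq_bigr => w _; case: ltngtP => [_|_|/val_inj ->]; rewrite ?R_irr /= ?addn0 //.
by rewrite add0n R_sym.
Qed.

Lemma sum_window_nat m lo hi :
  \sum_(0 <= i < m) (lo <= i < hi : nat) = minn m hi - lo.
Proof.
elim: m => [|m IHm]; first by rewrite big_geq // min0n.
by rewrite big_nat_recr //= IHm; case: (leqP lo m); case: (ltnP m hi); lia.
Qed.

Lemma sum_window r (z0 : 'I_r) lo hi : hi <= r ->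
  \sum_(z < r) (lo <= (z0 + z) %% r < hi : nat) = hi - lo.
Proof.
move=> hi_le_r; have r_gt0 : 0 < r := leq_ltn_trans (leq0n z0) (ltn_ord z0).
pose rot (z : 'I_r) : 'I_r := Ordinal (ltn_pmod (z0 + z) r_gt0).
have rot_inj : injective rot.
  move=> z1 z2 /(congr1 val) /= /eqP; rewrite eqn_modDl !modn_small //.
  by move/eqP/val_inj.
transitivity (\sum_(z < r) (lo <= z < hi : nat)); first by rewrite [RHS](reindex_inj rot_inj).
by rewrite -(big_mkord xpredT (fun i => (lo <= i < hi : nat))) sum_window_nat (minn_idPr hi_le_r).
Qed.

Lemma sum_window0 r (z0 : 'I_r) hi : hi <= r -> \sum_(z < r) ((z0 + z) %% r < hi : nat) = hi.
Proof. by move/(sum_window z0 0); rewrite subn0. Qed.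

Section TwoColourings.
Variables (T : finType) (blue red : rel T).

Definition closed_nbhd (x : T) : pred T := fun y => [|| y == x, blue x y | red x y].

Definition pairs_within (R : rel T) (S : pred T) : nat :=
  \sum_(x | S x) \sum_(y | S y) (R x y : nat).

Lemma pairs_within_mono (phi : T -> T) (R : rel T) x : injective phi ->
  {mono phi : y z / blue y z} -> {mono phi : y z / red y z} -> {mono phi : y z / R y z} ->
  pairs_within R (closed_nbhd (phi x)) = pairs_within R (closed_nbhd x).
Proof.
move=> phi_inj phi_blue phi_red phi_R.
have nbhd_phi y : closed_nbhd (phi x) (phi y) = closed_nbhd x y.
  by rewrite /closed_nbhd (inj_eq phi_inj) phi_blue phi_red.
rewrite /pairs_within (reindex_inj phi_inj) /=; apply: eq_big => [y | y _].
  exact: nbhd_phi.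
by rewrite (reindex_inj phi_inj); apply: eq_big => [z | z _]; rewrite ?nbhd_phi ?phi_R.
Qed.

Hypotheses (blue_sym : symmetric blue) (red_sym : symmetric red)
  (blue_irr : irreflexive blue) (red_irr : irreflexive red)
  (blue_red : forall x y, blue x y -> red x y = false).

Definition ord_adj (u w : 'I_#|T|) : bool :=
  blue (enum_val u) (enum_val w) || red (enum_val u) (enum_val w).

Definition ord_col (u w : 'I_#|T|) : nat := if red (enum_val u) (enum_val w) then 2 else 1.

Lemma ord_adj_sym : symmetric ord_adj.
Proof. by move=> u w; rewrite /ord_adj blue_sym red_sym. Qed.

Lemma ord_adj_irr : irreflexive ord_adj.
Proof. by move=> u; rewrite /ord_adj blue_irr red_irr. Qed.

Lemma ord_col_sym u w : ord_col u w = ord_col w u.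
Proof. by rewrite /ord_col red_sym. Qed.

Lemma ord_col1 u w : ord_adj u w && (ord_col u w == 1) = blue (enum_val u) (enum_val w).
Proof.
rewrite /ord_adj /ord_col; case: ifP => [red_uw | _]; last by rewrite orbF andbT.
by rewrite andbF; symmetry; apply: contraTF red_uw => /blue_red->.
Qed.

Lemma ord_col2 u w : ord_adj u w && (ord_col u w == 2) = red (enum_val u) (enum_val w).
Proof. by rewrite /ord_adj /ord_col; case: ifP; rewrite ?orbT ?andbF. Qed.

Lemma ecol_v_ord_double v j (R : rel T) :
  (forall u w, ord_adj u w && (ord_col u w == j) = R (enum_val u) (enum_val w)) ->
  (ecol_v ord_adj ord_col j v).*2 = pairs_within R (closed_nbhd (enum_val v)).
Proof.
move=> col_R; set S := cnbhd ord_adj v.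
rewrite /ecol_v /ecol (card_lt_pairs_double
  (R := fun u w => [&& u \in S, w \in S, ord_adj u w & ord_col u w == j])); last 2 first.
- by move=> u w; rewrite ord_adj_sym ord_col_sym andbCA.
- by move=> u; rewrite ord_adj_irr !andbF.
have inS u : (u \in S) = closed_nbhd (enum_val v) (enum_val u).
  by rewrite inE /closed_nbhd (inj_eq enum_val_inj).
rewrite /pairs_within [RHS]big_mkcond -[RHS]sum_enum_val; apply: eq_bigr => u _.
rewrite inS; case: (closed_nbhd _ _) => /=; last exact: big1_eq.
rewrite [RHS]big_mkcond -[RHS]sum_enum_val; apply: eq_bigr => w _.
by rewrite inS col_R; case: (closed_nbhd _ _).
Qed.

Lemma h_le_of_two_colouring b r N :
  0 < #|T| -> #|T| <= N ->
  (forall x, #|[set y | blue x y]| = b) -> (forall x, #|[set y | red x y]| = r) ->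
  (forall x, pairs_within red (closed_nbhd x) < pairs_within blue (closed_nbhd x)) ->
  h_le b r N.
Proof.
move=> T_gt0 T_leN deg_blue deg_red red_lt_blue.
exists #|T|, ord_adj; split; first exact: T_gt0.
split; first exact: T_leN.
split.
- by split=> [|u]; [exact: ord_adj_sym | rewrite ord_adj_irr].
- move=> v; rewrite big_ltn // big_ltn // big_geq // /seq2 /= addn0.
  rewrite /nbhd -(deg_blue (enum_val v)) -(deg_red (enum_val v)) !card_set_sum.
  rewrite -big_split -[RHS]sum_enum_val; apply: eq_bigr => u _ /=.
  by rewrite /ord_adj; case: (boolP (blue _ _)) => [/blue_red->|].
exists ord_col; split.
- by move=> u w _; apply: ord_col_sym.
- by move=> u w _; rewrite /ord_col; case: ifP.
- move=> v j /andP[j_ge1 j_le2]; rewrite /deg_col.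
  have [->|->] : j = 1 \/ j = 2 by lia.
  + rewrite -(deg_blue (enum_val v)) -(card_set_enum_val (blue (enum_val v))).
    by apply: eq_card => w; rewrite !inE ord_col1.
  + rewrite -(deg_red (enum_val v)) -(card_set_enum_val (red (enum_val v))).
    by apply: eq_card => w; rewrite !inE ord_col2.
- move=> v j /andP[j_ge1 j_lt2]; have -> : j = 1 by lia.
  by rewrite -ltn_double (ecol_v_ord_double _ ord_col2) (ecol_v_ord_double _ ord_col1).
Qed.

End TwoColourings.

Section Construction.
Variables (a b r : nat).
Local Notation V := (bool * bool * 'I_r)%type.

Definition red_adj (x y : V) : bool := (x.1.1 (+) y.1.1) && ~~ (x.1.2 (+) y.1.2).

Definition blue_adj (x y : V) : bool :=
  (x.1.2 (+) y.1.2) &&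
  (if x.1.1 (+) y.1.1 then a <= (x.2 + y.2) %% r < b else (x.2 + y.2) %% r < a).

Definition flip_bits (p q : bool) (x : V) : V := (x.1.1 (+) p, x.1.2 (+) q, x.2).

Lemma red_adj_sym : symmetric red_adj.
Proof. by move=> x y; rewrite /red_adj addbC [x.1.2 (+) _]addbC. Qed.

Lemma blue_adj_sym : symmetric blue_adj.
Proof. by move=> x y; rewrite /blue_adj addbC [x.1.1 (+) _]addbC addnC. Qed.

Lemma red_adj_irr : irreflexive red_adj.
Proof. by move=> x; rewrite /red_adj addbb. Qed.

Lemma blue_adj_irr : irreflexive blue_adj.
Proof. by move=> x; rewrite /blue_adj addbb. Qed.

Lemma blue_adj_red_adj x y : blue_adj x y -> red_adj x y = false.
Proof. by rewrite /blue_adj /red_adj => /andP[-> _]; rewrite andbF. Qed.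

Lemma flip_bits_inj p q : injective (flip_bits p q).
Proof. by move=> [[? ?] ?] [[? ?] ?] /= [/addIb-> /addIb-> ->]. Qed.

Lemma red_adj_flip p q : {mono flip_bits p q : x y / red_adj x y}.
Proof. by move=> x y; rewrite /red_adj /= (addbACA x.1.1) (addbACA x.1.2) !addbb !addbF. Qed.

Lemma blue_adj_flip p q : {mono flip_bits p q : x y / blue_adj x y}.
Proof. by move=> x y; rewrite /blue_adj /= (addbACA x.1.1) (addbACA x.1.2) !addbb !addbF. Qed.

Lemma sum_layers (F : V -> nat) :
  \sum_(x : V) F x = \sum_(z < r) F (false, false, z) + \sum_(z < r) F (true, false, z)
                   + \sum_(z < r) F (false, true, z) + \sum_(z < r) F (true, true, z).
Proof.
rewrite (eq_bigr (fun x => F (x.1, x.2))) => [|[]//].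
rewrite -(pair_bigA _ (fun ij z => F (ij, z))) /=.
rewrite (eq_bigr (fun ij => \sum_z F (ij.1, ij.2, z))) => [|[]//].
by rewrite -(pair_bigA _ (fun i j => \sum_z F (i, j, z))) /= !big_bool /= addnA; lia.
Qed.

Hypotheses (a_le_b : a <= b) (b_le_r : b <= r).
Let a_le_r : a <= r := leq_trans a_le_b b_le_r.

Section Neighbourhood.
Variable z0 : 'I_r.

Lemma blue_adj_deg0 : #|[set y | blue_adj (false, false, z0) y]| = b.
Proof.
rewrite card_set_sum sum_layers /blue_adj /= !big1_eq sum_window0 // sum_window //.
by rewrite add0n; apply: subnKC.
Qed.

Lemma red_adj_deg0 : #|[set y | red_adj (false, false, z0) y]| = r.
Proof. by rewrite card_set_sum sum_layers /red_adj /= !big1_eq sum1_card card_ord !addn0 add0n. Qed.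

Local Notation N := (closed_nbhd blue_adj red_adj (false, false, z0)).

Lemma sum_closed_nbhd (F : V -> nat) :
  \sum_(y | N y) F y =
    \sum_(z < r | z == z0) F (false, false, z) + \sum_(z < r) F (true, false, z)
  + \sum_(z < r | (z0 + z) %% r < a) F (false, true, z)
  + \sum_(z < r | a <= (z0 + z) %% r < b) F (true, true, z).
Proof.
rewrite big_mkcond sum_layers; congr (_ + _ + _ + _); rewrite [RHS]big_mkcond;
  by apply: eq_bigr => z _; rewrite /closed_nbhd /blue_adj /red_adj /= ?xpair_eqE /= ?orbF.
Qed.

Lemma red_deg_in_nbhd_tf z : \sum_(y | N y) (red_adj (true, false, z) y : nat) = 1.
Proof. by rewrite sum_closed_nbhd /red_adj /= big_pred1_eq !big1_eq. Qed.

Lemma red_deg_in_nbhd_tt z : \sum_(y | N y) (red_adj (true, true, z) y : nat) = a.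
Proof.
rewrite sum_closed_nbhd /red_adj /= !big1_eq sum_nat_cond_const muln1 card_set_sum.
by rewrite sum_window0 // addn0 !add0n.
Qed.

Lemma blue_deg_in_nbhd_ft z :
  \sum_(y | N y) (blue_adj (false, true, z) y : nat) = ((z + z0) %% r < a) + (b - a).
Proof. by rewrite sum_closed_nbhd /blue_adj /= big_pred1_eq !big1_eq sum_window // !addn0. Qed.

Lemma blue_deg_in_nbhd_tt z :
  \sum_(y | N y) (blue_adj (true, true, z) y : nat) = (a <= (z + z0) %% r < b) + a.
Proof.
rewrite sum_closed_nbhd /blue_adj /= big_pred1_eq !big1_eq.
by rewrite sum_window0 // !addn0.
Qed.

Lemma red_pairs_nbhd : pairs_within red_adj N = (r + a * (b - a)).*2.
Proof.
rewrite /pairs_within (sum_pairs_bipartite _ (s := fun x : V => x.1.1) red_adj_sym); last first.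
  by move=> x y /andP[/addbP <- _].
rewrite big_mkcondr sum_closed_nbhd /= !big1_eq.
rewrite (eq_bigr _ (fun z _ => red_deg_in_nbhd_tf z)) (eq_bigr _ (fun z _ => red_deg_in_nbhd_tt z)).
rewrite sum1_card card_ord sum_nat_cond_const card_set_sum sum_window //; lia.
Qed.

Lemma blue_pairs_nbhd : pairs_within blue_adj N = (b + 2 * (a * (b - a))).*2.
Proof.
rewrite /pairs_within (sum_pairs_bipartite _ (s := fun x : V => x.1.2) blue_adj_sym); last first.
  by move=> x y /andP[/addbP <- _].
rewrite big_mkcondr sum_closed_nbhd /= !big1_eq.
rewrite (eq_bigr (fun _ => (b - a).+1)) => [|z in_z]; last first.
  by rewrite blue_deg_in_nbhd_ft [z + z0]addnC in_z add1n.
rewrite [X in _ + X](eq_bigr (fun _ => a.+1)) => [|z in_z]; last first.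
  by rewrite blue_deg_in_nbhd_tt [z + z0]addnC in_z add1n.
rewrite !sum_nat_cond_const !card_set_sum sum_window0 // sum_window //; nia.
Qed.
End Neighbourhood.

Lemma blue_adj_deg x : #|[set y | blue_adj x y]| = b.
Proof.
case: x => [[i j] z]; rewrite -[(i, j, z)]/(flip_bits i j (false, false, z)).
by rewrite (card_set_mono _ (@flip_bits_inj i j) (@blue_adj_flip i j)) blue_adj_deg0.
Qed.

Lemma red_adj_deg x : #|[set y | red_adj x y]| = r.
Proof.
case: x => [[i j] z]; rewrite -[(i, j, z)]/(flip_bits i j (false, false, z)).
by rewrite (card_set_mono _ (@flip_bits_inj i j) (@red_adj_flip i j)) red_adj_deg0.
Qed.

Lemma red_pairs_lt_blue_pairs x : r < b + a * (b - a) ->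
  pairs_within red_adj (closed_nbhd blue_adj red_adj x) <
  pairs_within blue_adj (closed_nbhd blue_adj red_adj x).
Proof.
move=> r_lt; case: x => [[i j] z]; rewrite -[(i, j, z)]/(flip_bits i j (false, false, z)).
have mono := pairs_within_mono (false, false, z) (@flip_bits_inj i j)
  (@blue_adj_flip i j) (@red_adj_flip i j).
rewrite (mono _ (@red_adj_flip i j)) (mono _ (@blue_adj_flip i j)).
rewrite red_pairs_nbhd blue_pairs_nbhd; lia.
Qed.

End Construction.

Lemma sq_sixth_le_halves b : 2 * ((b + 2) %/ 6) ^ 2 <= b %/ 2 * (b - b %/ 2).
Proof.
have le_half : 2 * ((b + 2) %/ 6) <= b %/ 2 by lia.
have half_le : b %/ 2 <= b - b %/ 2 by lia.
have := leq_mul le_half (leq_trans le_half half_le); nia.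
Qed.

Lemma four_mul_le_flip_bound b r :
  4 * r <= 8 * lambda_br b r * (2 + r %/ 2 + (b + 2) %/ 2 - 2 * ((b + 2) %/ 6)).
Proof.
have lambda_gt0 : 0 < lambda_br b r by rewrite /lambda_br leq_maxl.
apply: (@leq_trans (8 * (2 + r %/ 2 + (b + 2) %/ 2 - 2 * ((b + 2) %/ 6)))); first lia.
by rewrite -mulnA leq_mul2l leq_pmull.
Qed.

Theorem theorem3p1 (b r : nat) :
  4 <= b -> b < r -> r < b + 2 * ((b + 2) %/ 6) ^ 2 ->
  h_le b r (8 * lambda_br b r *
            (2 + r %/ 2 + (b + 2) %/ 2 - 2 * ((b + 2) %/ 6))).
Proof.
(* floor((b+2)/6) = 0 for b <= 3, so the bound on r already forces 4 <= b. *)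
move=> _ b_lt_r r_lt.
have half_le_b : b %/ 2 <= b := leq_div b 2.
have b_le_r := ltnW b_lt_r.
have card_V : #|{: bool * bool * 'I_r}| = 4 * r by rewrite !card_prod !card_bool card_ord.
apply: (h_le_of_two_colouring (@blue_adj_sym (b %/ 2) b r) (@red_adj_sym r)
          (@blue_adj_irr _ _ r) (@red_adj_irr r) (@blue_adj_red_adj _ _ r)) => [||x|x|x].
- by rewrite card_V; lia.
- by rewrite card_V four_mul_le_flip_bound.
- exact: blue_adj_deg.
- exact: red_adj_deg.
- apply: red_pairs_lt_blue_pairs => //.
  by apply: leq_trans r_lt _; rewrite leq_add2l sq_sixth_le_halves.
Qed.
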